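(* (Knaster–Tarski proof principle) Let $\mathscr{S}$ be an expressivity situation and $x\colon X\to BX$ a $B$-coalgebra. If the set $\{[\![\varphi]\!]_x\mid\varphi\in L_{\mathscr{S}}\}\subseteq\mathcal{C}(X,\Omega)$ is an approximating family, then $\mathscr{S}$ is expressive for $x$, i.e. $\nu\bigl(x^*\circ\overline{B}^{\underline{\Omega},\tau}\bigr)\sqsupseteq\bigwedge_{\varphi\in L_{\mathscr{S}}}[\![\varphi]\!]_x^{*}\underline{\Omega}$.
   Context: An expressivity situation $\mathscr{S}=(p,B,\Omega,\underline{\Omega},\Sigma,\Lambda,(f_\sigma),(\tau_\lambda))$ consists of: a fibration $p\colon\mathcal{E}\to\mathcal{C}$ whose fibers $\mathcal{E}_X$ are complete lattices (order $\sqsubseteq$, meets $\bigwedge$) with meet-preserving reindexing $f^*$; a functor $B\colon\mathcal{C}\to\mathcal{C}$; $\Omega\in\mathcal{C}$ with finite powers and $\underline{\Omega}\in\mathcal{E}$ above $\Omega$; a ranked alphabet $\Sigma$ with arrows $f_\sigma\colon\Omega^{\mathrm{rank}(\sigma)}\to\Omega$ each lifting to some $g_\sigma\colon\underline{\Omega}^{\mathrm{rank}(\sigma)}\to\underline{\Omega}$ with $pg_\sigma=f_\sigma$; a set $\Lambda$ and arrows $\tau_\lambda\colon B\Omega\to\Omega$. Formulas of $L_{\mathscr{S}}$: $\varphi::=\sigma(\varphi_1,\dots,\varphi_{\mathrm{rank}(\sigma)})\mid\heartsuit_\lambda\varphi$, with semantics $[\![\sigma(\varphi_1,\dots)]\!]_x=f_\sigma\circ\langle[\![\varphi_1]\!]_x,\dots\rangle$,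 $[\![\heartsuit_\lambda\varphi]\!]_x=\tau_\lambda\circ B[\![\varphi]\!]_x\circ x$. Codensity lifting: $\overline{B}^{\underline{\Omega},\tau}P=\bigwedge_{\lambda\in\Lambda,\,h\in\mathcal{E}(P,\underline{\Omega})}(\tau_\lambda\circ B(ph))^*\underline{\Omega}$; codensity bisimilarity is the greatest fixed point $\nu(x^*\circ\overline{B}^{\underline{\Omega},\tau})$ in $\mathcal{E}_X$. A subset $S\subseteq\mathcal{C}(X,\Omega)$ is an approximating family if for every $\mathcal{E}$-arrow $h\colon\bigwedge_{k\in S}k^*\underline{\Omega}\to\underline{\Omega}$ and every $\lambda\in\Lambda$, $\bigwedge_{k'\in S,\lambda'\in\Lambda}(\tau_{\lambda'}\circ Bk')^*\underline{\Omega}\sqsubseteq(\tau_\lambda\circ B(ph))^*\underline{\Omega}$. *)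

From mathcomp Require Import all_boot.

Set Implicit Arguments.
Unset Strict Implicit.
Unset Printing Implicit Defensive.

Record Category := {
  Ob : Type;
  Hom : Ob -> Ob -> Type;
  idm : forall X, Hom X X;
  comp : forall X Y Z, Hom Y Z -> Hom X Y -> Hom X Z;
  comp_id_l : forall X Y (f : Hom X Y), comp (idm Y) f = f;
  comp_id_r : forall X Y (f : Hom X Y), comp f (idm X) = f;
  comp_assoc : forall X Y Z W (f : Hom X Y) (g : Hom Y Z) (h : Hom Z W),
      comp h (comp g f) = comp (comp h g) f }.
Arguments idm {c} X.
Arguments comp {c X Y Z}.

Record Endofunctor (C : Category) := {
  Fob : Ob C -> Ob C;
  Fmap : forall X Y, Hom X Y -> Hom (Fob X) (Fob Y);
  Fmap_id : forall X, Fmap (idm X) = idm (Fob X);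
  Fmap_comp : forall X Y Z (f : Hom X Y) (g : Hom Y Z),
      Fmap (comp g f) = comp (Fmap g) (Fmap f) }.
Arguments Fob {C}.
Arguments Fmap {C} _ {X Y}.

(** * CLat_meet-fibrations, presented (equivalently, via the Grothendieck
    construction) as indexed complete lattices with meet-preserving
    reindexing. *)
Record CLatFib (C : Category) := {
  fib : Ob C -> Type;
  fle : forall X, fib X -> fib X -> Prop;
  fmeet : forall X, (fib X -> Prop) -> fib X;
  fle_refl : forall X (P : fib X), fle P P;
  fle_trans : forall X (P Q R : fib X), fle P Q -> fle Q R -> fle P R;
  fle_antisym : forall X (P Q : fib X), fle P Q -> fle Q P -> P = Q;
  fmeet_lb : forall X (S : fib X -> Prop) P, S P -> fle (fmeet S) P;
  fmeet_glb : forall X (S : fib X -> Prop) Q,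
      (forall P, S P -> fle Q P) -> fle Q (fmeet S);
  reindex : forall X Y, Hom X Y -> fib Y -> fib X;
  reindex_id : forall X (P : fib X), reindex (idm X) P = P;
  reindex_comp : forall X Y Z (f : Hom X Y) (g : Hom Y Z) (P : fib Z),
      reindex (comp g f) P = reindex f (reindex g P);
  reindex_meet : forall X Y (f : Hom X Y) (S : fib Y -> Prop),
      reindex f (fmeet S) = fmeet (fun P => exists2 Q, S Q & P = reindex f Q) }.
Arguments fib {C}.
Arguments fle {C c X}.
Arguments fmeet {C c X}.
Arguments reindex {C c X Y}.

(** Arrows of the total category E from P (above X) to Q (above Y):
    an arrow f : X -> Y of C with P below f^* Q (the fibration is posetal).
    [proj1_sig] is the functor p on arrows. *)
Definition Earrow (C : Category) (F : CLatFib C) (X Y : Ob C)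
  (P : fib F X) (Q : fib F Y) := { f : Hom X Y | fle P (reindex f Q) }.

Definition fjoin (C : Category) (F : CLatFib C) (X : Ob C)
  (S : fib F X -> Prop) : fib F X :=
  fmeet (fun U => forall P, S P -> fle P U).

Definition gfp (C : Category) (F : CLatFib C) (X : Ob C)
  (Phi : fib F X -> fib F X) : fib F X :=
  fjoin (fun P => fle P (Phi P)).

Record FinPowers (C : Category) (Om : Ob C) := {
  pw : nat -> Ob C;
  pproj : forall n, 'I_n -> Hom (pw n) Om;
  ptuple : forall X n, ('I_n -> Hom X Om) -> Hom X (pw n);
  pproj_tuple : forall X n (fs : 'I_n -> Hom X Om) i,
      comp (pproj i) (ptuple fs) = fs i;
  ptuple_unique : forall X n (g : Hom X (pw n)),
      ptuple (fun i => comp (pproj i) g) = g }.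
Arguments pw {C Om}.
Arguments pproj {C Om} _ {n}.
Arguments ptuple {C Om} _ {X n}.

(** The power (Omega-bar)^n in the total category E: the fibred product
    /\_i pi_i^* Omega-bar, lying above Omega^n. *)
Definition Epow (C : Category) (F : CLatFib C) (Om : Ob C)
  (pows : FinPowers Om) (Omb : fib F Om) (n : nat) : fib F (pw pows n) :=
  fmeet (fun P => exists i : 'I_n, P = reindex (pproj pows i) Omb).

Record ExprSit := {
  Cat_ : Category;
  B_ : Endofunctor Cat_;
  F_ : CLatFib Cat_;
  Om_ : Ob Cat_;
  pows_ : FinPowers Om_;
  Omb_ : fib F_ Om_;
  Sigma_ : Type;
  rank_ : Sigma_ -> nat;
  fsig_ : forall s : Sigma_, Hom (pw pows_ (rank_ s)) Om_;
  fsig_lift : forall s : Sigma_,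
      exists g : Earrow (Epow pows_ Omb_ (rank_ s)) Omb_, proj1_sig g = fsig_ s;
  Lam_ : Type;
  tau_ : Lam_ -> Hom (Fob B_ Om_) Om_ }.

Inductive formula (S : ExprSit) : Type :=
| fSig (s : Sigma_ S) (args : 'I_(rank_ s) -> formula S)
| fBox (l : Lam_ S) (phi : formula S).

Fixpoint sem (S : ExprSit) (X : Ob (Cat_ S)) (x : Hom X (Fob (B_ S) X))
  (phi : formula S) {struct phi} : Hom X (Om_ S) :=
  match phi with
  | fSig s args => comp (fsig_ s) (ptuple (pows_ S) (fun i => sem x (args i)))
  | fBox l psi => comp (tau_ l) (comp (Fmap (B_ S) (sem x psi)) x)
  end.

Definition codlift (S : ExprSit) (X : Ob (Cat_ S)) (P : fib (F_ S) X)
  : fib (F_ S) (Fob (B_ S) X) :=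
  fmeet (fun Q => exists (l : Lam_ S) (h : Earrow P (Omb_ S)),
           Q = reindex (comp (tau_ l) (Fmap (B_ S) (proj1_sig h))) (Omb_ S)).

Definition codbisim (S : ExprSit) (X : Ob (Cat_ S)) (x : Hom X (Fob (B_ S) X))
  : fib (F_ S) X :=
  gfp (fun P => reindex x (codlift P)).

Definition approximating (S : ExprSit) (X : Ob (Cat_ S))
  (Sf : Hom X (Om_ S) -> Prop) : Prop :=
  forall (h : Earrow (fmeet (fun P => exists2 k, Sf k & P = reindex k (Omb_ S)))
                     (Omb_ S))
         (l : Lam_ S),
    fle (fmeet (fun Q => exists k' (l' : Lam_ S), Sf k' /\
             Q = reindex (comp (tau_ l') (Fmap (B_ S) k')) (Omb_ S)))
        (reindex (comp (tau_ l) (Fmap (B_ S) (proj1_sig h))) (Omb_ S)).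

Definition logeq (S : ExprSit) (X : Ob (Cat_ S)) (x : Hom X (Fob (B_ S) X))
  : fib (F_ S) X :=
  fmeet (fun P => exists phi : formula S, P = reindex (sem x phi) (Omb_ S)).

(* The meet L of the formula-predicates [[phi]]_x^* Omega-bar is a post-fixed
   point of x^* o B-bar, hence lies below the greatest fixed point.  Since the
   formulas are closed under the modalities, x^* of every predicate
   (tau_l o B [[phi]]_x)^* Omega-bar is again one of the predicates defining L,
   so L lies below x^* of their meet; the approximating-family hypothesis
   bounds that meet by each generator (tau_l o B h)^* Omega-bar of the
   codensity lifting of L, and monotonicity of x^* concludes. *)
From Pilot Require Import Defs.
From mathcomp Require Import all_boot.

(* all_boot's [reindex] (bigop) and [comp] (ssrfun) shadow those of Defs. *)
Notation reindex := Defs.reindex.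
Notation comp := Defs.comp.

Section FibreLattice.

Variables (C : Category) (F : CLatFib C).

Lemma eq_fmeet (X : Ob C) (S T : fib F X -> Prop) :
  (forall P, S P <-> T P) -> fmeet S = fmeet T.
Proof.
by move=> eqST; apply: fle_antisym; apply: fmeet_glb => P SP; apply: fmeet_lb;
  apply/eqST.
Qed.

Lemma reindex_mono (X Y : Ob C) (f : Hom X Y) (P Q : fib F Y) :
  fle P Q -> fle (reindex f P) (reindex f Q).
Proof.
move=> lePQ.
have -> : P = fmeet (fun R => R = P \/ R = Q).
  apply: fle_antisym; last by apply: fmeet_lb; left.
  by apply: fmeet_glb => R [->|->] //; apply: fle_refl.
by rewrite reindex_meet; apply: fmeet_lb; exists Q => //; right.
Qed.

Lemma fle_reindex_fmeet (X Y : Ob C) (f : Hom X Y) (P : fib F X)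
    (S : fib F Y -> Prop) :
  (forall Q, S Q -> fle P (reindex f Q)) -> fle P (reindex f (fmeet S)).
Proof.
move=> leP; rewrite reindex_meet.
by apply: fmeet_glb => _ [Q SQ ->]; apply: leP.
Qed.

Lemma fle_gfp (X : Ob C) (Phi : fib F X -> fib F X) (P : fib F X) :
  fle P (Phi P) -> fle P (gfp Phi).
Proof. by move=> postP; apply: fmeet_glb => U; apply. Qed.

End FibreLattice.

Section Expressivity.

Variables (S : ExprSit) (X : Ob (Cat_ S)) (x : Hom X (Fob (B_ S) X)).

Definition definable (k : Hom X (Om_ S)) : Prop :=
  exists phi : formula S, sem x phi = k.

Definition modal_meet (Sf : Hom X (Om_ S) -> Prop) :
    fib (F_ S) (Fob (B_ S) X) :=
  fmeet (fun Q => exists k (l : Lam_ S), Sf k /\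
           Q = reindex (comp (tau_ l) (Fmap (B_ S) k)) (Omb_ S)).

Lemma logeq_definable :
  logeq x = fmeet (fun P => exists2 k, definable k & P = reindex k (Omb_ S)).
Proof.
apply: eq_fmeet => P; split=> [[phi ->]|[_ [phi <-] ->]]; last by exists phi.
by exists (sem x phi) => //; exists phi.
Qed.

Lemma logeq_le_modal_meet : fle (logeq x) (reindex x (modal_meet definable)).
Proof.
apply: fle_reindex_fmeet => _ [_ [l [[phi <-] ->]]].
by rewrite -reindex_comp -comp_assoc; apply: fmeet_lb; exists (fBox l phi).
Qed.

Lemma logeq_postfixed :
  approximating definable -> fle (logeq x) (reindex x (codlift (logeq x))).
Proof.
move=> approx; apply: fle_reindex_fmeet => _ [l [h ->]].
apply: fle_trans logeq_le_modal_meet _; apply: reindex_mono.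
by move: h; rewrite logeq_definable => h; apply: approx.
Qed.

End Expressivity.

Theorem mainTheorem2 (S : ExprSit) (X : Ob (Cat_ S)) (x : Hom X (Fob (B_ S) X)) :
  approximating (fun k : Hom X (Om_ S) => exists phi : formula S, sem x phi = k) ->
  fle (logeq x) (codbisim x).
Proof. by move=> approx; apply: fle_gfp; apply: logeq_postfixed. Qed.
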